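(* Let $s\ge1$, $M=(p^s-1)/2$, $1\le l\le g$ and $\delta_l=(2g+1)M-lp^s$. Then, as rational functions of $z$, $$(-1)^{\delta_l}\,(z_{n-2l}-z_n)^l\;\tilde I^{[lp^s-1]}_{p^s}(z)=x_1^{M}\,Q^{l,s}(x_2,\dots,x_{n-1}),$$ where $x_1,\dots,x_{n-1}$ are the rational functions of $z$ defined below. Moreover, the constant term of $Q^{l,s}$ equals $\binom{M}{l}\big(0,\dots,0,\tfrac{l}{M},1,\dots,1\big)$, with $0$ repeated $2g-2l$ times, $l/M$ in position $2g-2l+1$, and $1$ repeated $2l$ times.
   Context: Let $p$ be an odd prime, $g\ge1$, $n=2g+1$, with $p>n$; $z=(z_1,\dots,z_n)$. Put $M=(p^s-1)/2$, $\Phi_{p^s}(x,z)=\prod_{i=1}^n(x-z_i)^{M}$; substitute $x=v+z_n$ and expand $\Big(\frac{\Phi_{p^s}(v+z_n,z)}{v+z_n-z_1},\dots,\frac{\Phi_{p^s}(v+z_n,z)}{v+z_n-z_{n-1}},\frac{\Phi_{p^s}(v+z_n,z)}{v}\Big)=\sum_i\tilde P^i_{p^s}(z)v^i$ with $\tilde P^i_{p^s}(z)\in\mathbb Z[z]^n$; set $\tilde I^{[lp^s-1]}_{p^s}(z)=\tilde P^{lp^s-1}_{p^s}(z)$. Fix $1\le l\le g$. Define $x_1=\prod_{i=1}^{n-2l}(z_i-z_n)$; $x_i=\frac{z_{n-2l}-z_n}{z_{i-1}-z_n}$ for $2\le i\le n-2l$; $x_i=\frac{z_i-z_n}{z_{n-2l}-z_n}$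 for $n-2l+1\le i\le n-1$. Define the polynomial vector $Q^{l,s}=(Q^{l,s}_1,\dots,Q^{l,s}_n)$ in $x_2,\dots,x_{n-1}$ as follows. Write $X(a)=\prod_{i=2}^{n-2l}x_i^{a_{i-1}}\prod_{i=n-2l+1}^{n-1}x_i^{a_i}$ for $a=(a_1,\dots,a_{n-1})$; all sums below are over $a\in\mathbb Z^{n-1}$ with $0\le a_i\le M$. For $1\le j\le n-2l-1$: $Q^{l,s}_j=x_{j+1}\sum\binom{M-1}{a_j}\prod_{i\ne j}\binom{M}{a_i}X(a)$, summed over $a$ with $a_1+\dots+a_{n-2l}=a_{n-2l+1}+\dots+a_{n-1}+l-1$. For $j=n-2l$: $Q^{l,s}_j=\sum\binom{M-1}{a_j}\prod_{i\ne j}\binom{M}{a_i}X(a)$, same summation condition (with $l-1$). For $n-2l<j\le n-1$: $Q^{l,s}_j=\sum\binom{M-1}{a_j}\prod_{i\ne j}\binom{M}{a_i}X(a)$, summed over $a$ with $a_1+\dots+a_{n-2l}=a_{n-2l+1}+\dots+a_{n-1}+l$. $Q^{l,s}_n=\sum\prod_{i=1}^{n-1}\binom{M}{a_i}X(a)$, summed over $a$ with $a_1+\dots+a_{n-2l}=a_{n-2l+1}+\dots+a_{n-1}+l$. (Products $\prod_{i\ne j}$ are over $i\in\{1,\dots,n-1\}\setminus\{j\}$.) *)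

From HB Require Import structures.
From mathcomp Require Import all_boot all_order all_algebra.
From mathcomp Require Import mpoly.
Unset Printing Implicit Defensive.
Import Order.TTheory GRing.Theory Num.Theory.
Local Open Scope ring_scope.

(* Conventions: n = 2g+1.  The points z_1..z_n are given as z : nat -> F
   (only z 1, ..., z n matter).  Vectors indexed 1..n are given as functions
   of j : nat (only j = 1..n matter).  Exponent vectors a = (a_1,..,a_{n-1})
   are finite functions 'I_(n-1) -> 'I_(M+1), with a_i = a (i-1). *)

Definition nn (g : nat) : nat := (2 * g).+1.
Definition MM (p s : nat) : nat := ((p ^ s).-1)./2.
Definition cut (g l : nat) : nat := (nn g - 2 * l)%N.

Section Defs.
Variable F : fieldType.

(* Phi_{p^s}(v + z_n, z) = prod_{i=1}^n (v + z_n - z_i)^M, as a polynomial in v *)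
Definition PhiV (g M : nat) (z : nat -> F) : {poly F} :=
  \prod_(1 <= i < (nn g).+1) ('X + (z (nn g) - z i)%:P) ^+ M.

Definition PhiComp (g M : nat) (z : nat -> F) (j : nat) : {poly F} :=
  PhiV g M z %/ ('X + (z (nn g) - z j)%:P).

Definition Itilde (p s g l : nat) (z : nat -> F) (j : nat) : F :=
  (PhiComp g (MM p s) z j)`_(l * p ^ s - 1)%N.

Definition x1 (g l : nat) (z : nat -> F) : F :=
  \prod_(1 <= i < (cut g l).+1) (z i - z (nn g)).

Definition xval (g l : nat) (z : nat -> F) (i : nat) : F :=
  let n := nn g in
  if (i <= cut g l)%N then (z (cut g l) - z n) / (z (i.-1)%N - z n)
  else (z i - z n) / (z (cut g l) - z n).

(* the point (x_2, ..., x_{n-1}); mpoly variable k corresponds to x_{k+2} *)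
Definition xpt (g l : nat) (z : nat -> F) : 'I_(nn g - 2) -> F :=
  fun k => xval g l z (k.+2).

Definition xvar (g : nat) (i : nat) : {mpoly F[nn g - 2]} :=
  if (insub (i - 2)%N : option 'I_(nn g - 2)) is Some m then 'X_m else 0.

Definition aa (g M : nat) (a : {ffun 'I_(nn g - 1) -> 'I_M.+1}) (i : nat) : nat :=
  if (insub (i - 1)%N : option 'I_(nn g - 1)) is Some m then nat_of_ord (a m) else 0.

Definition Xmon (g l M : nat) (a : {ffun 'I_(nn g - 1) -> 'I_M.+1})
  : {mpoly F[nn g - 2]} :=
  (\prod_(2 <= i < (cut g l).+1) xvar g i ^+ aa g M a (i - 1)%N) *
  (\prod_((cut g l).+1 <= i < nn g) xvar g i ^+ aa g M a i).

Definition acond (g l M c : nat) (a : {ffun 'I_(nn g - 1) -> 'I_M.+1}) : bool :=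
  (\sum_(1 <= i < (cut g l).+1) aa g M a i
  == \sum_((cut g l).+1 <= i < nn g) aa g M a i + c)%N.

Definition acoef (g M j : nat) (a : {ffun 'I_(nn g - 1) -> 'I_M.+1}) : nat :=
  (\prod_(1 <= i < nn g) 'C(if i == j then (M - 1)%N else M, aa g M a i))%N.

Definition Qsum (g l M c j : nat) : {mpoly F[nn g - 2]} :=
  \sum_(a : {ffun 'I_(nn g - 1) -> 'I_M.+1} | acond g l M c a)
     (acoef g M j a)%:R *: Xmon g l M a.

Definition Qls (p s g l : nat) (j : nat) : {mpoly F[nn g - 2]} :=
  let n := nn g in let M := MM p s in
  if (j < cut g l)%N then xvar g j.+1 * Qsum g l M (l - 1) j
  else if (j == cut g l)%N then Qsum g l M (l - 1) j
  else Qsum g l M l j.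

End Defs.

Arguments PhiV {F} g M z.
Arguments PhiComp {F} g M z j.
Arguments Itilde {F} p s g l z j.
Arguments x1 {F} g l z.
Arguments xval {F} g l z i.
Arguments xpt {F} g l z k.

From HB Require Import structures.
From mathcomp Require Import all_boot all_order all_algebra.
From mathcomp Require Import mpoly.
From mathcomp Require Import zify ring.
Import Order.TTheory GRing.Theory Num.Theory.
Local Open Scope ring_scope.

(* Put w_i = z_n - z_i.  Then Phi(v + z_n) = v^M prod_{i<n} (v + w_i)^M, so the
   j-th component Phi / (v + w_j) is v^(M-[j=n]) prod_{i<n} (v + w_i)^(e_j i)
   with e_j i = M - [i=j], and Itilde_j is a coefficient of the product.
   Expanding every factor by the binomial theorem, with the summation index
   b_i counting powers of v when i <= c and powers of w_i when i > c, writes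
   this coefficient as a sum over exponent vectors a.  A term has the right
   v-degree exactly when a satisfies the summation condition of Q
   ([degree_condition]); for such a term the w-part, rescaled by (z_c - z_n)^l,
   equals x_1^M X(a) (times x_{j+1} when j < c) ([magnitude]) up to the sign
   (-1)^(nM - lp^s) ([sign_exponent]).
   For the constant term, only the exponent vector supported at position c
   survives ([Qsum_const]), and C(M-1,l-1) = (l/M) C(M,l). *)

(* With A = sum_{i<=c} b_i, B = sum_{i>c} b_i
   and E2 = sum_{i>c} e_j i, a term of the expansion has v-degree A + (E2 - B);
   it is the wanted degree K exactly when A = B + (l-1 or l, depending on j). *)
Section ExponentArithmetic.
Local Open Scope nat_scope.

Lemma degree_condition (lps M A B E2 j n c l lM : nat) :
  lps = 2 * lM + l -> E2 + (c < j < n) = 2 * lM - M -> M <= lM -> B <= E2 ->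
  j <= n -> c < n -> 1 <= l -> 1 <= M ->
  (lps - 1 - (M - (j == n)) == A + (E2 - B)) =
  (A == B + (if j <= c then l - 1 else l)).
Proof.
move=> hlps hE2 hMl hB hjn hcn hl hM.
case: (leqP j c) => hjc.
  have -> : (j == n) = false by apply/negP => /eqP; lia.
  have e : (c < j < n) = false by apply/negP; lia.
  by rewrite e in hE2; apply/eqP/eqP => H; lia.
have e : (c < j < n) = (j != n) by apply/idP/idP; [move/andP; lia | move=> /eqP; lia].
rewrite e in hE2; case: (eqVneq j n) hE2 => _ hE2; apply/eqP/eqP => H; lia.
Qed.

(* The total power of the w's in a term of the right degree is E1 - A + B,
   where E1 = sum_{i<=c} e_j i; it equals the sign exponent nM - lp^s. *)
Lemma sign_exponent (nM cM lM lps l c j E1 A B : nat) :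
  nM = cM + 2 * lM -> lps = 2 * lM + l -> E1 + (0 < j < c.+1) = cM ->
  A = B + (if j <= c then l - 1 else l) -> 1 <= j -> 1 <= l -> A <= E1 ->
  E1 - A + B = nM - lps.
Proof.
move=> hnM hlps hE1 + hj hl hA.
have e : (0 < j < c.+1) = (j <= c) by apply/idP/idP; [move/andP; lia | lia].
rewrite e in hE1; case: (leqP j c) => hjc hAB.
  by rewrite hjc in hE1; lia.
by move: hE1; rewrite leqNgt hjc; lia.
Qed.

End ExponentArithmetic.
Arguments degree_condition {lps M A B E2 j n c l lM}.
Arguments sign_exponent {nM cM lM lps l c j E1 A B}.

(* A binomial sum of length e+1 may be extended to any N >= e, since the
   binomial coefficients vanish beyond e. *)
Lemma sum_binomial_widen (V : zmodType) e N (G : nat -> V) : (e <= N)%N ->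
  \sum_(b < e.+1) G b *+ 'C(e, b) = \sum_(b < N.+1) G b *+ 'C(e, b).
Proof.
move=> he; rewrite (big_ord_widen N.+1 (fun b => G b *+ 'C(e, b))) ?ltnS //.
rewrite big_mkcond /=; apply: eq_bigr => b _; case: ltnP => // hb.
by rewrite bin_small // mulr0n.
Qed.

Lemma big_nat1_ord (R : Type) (idx : R) (op : Monoid.com_law idx) N (G : nat -> R) :
  \big[op/idx]_(1 <= i < N) G i = \big[op/idx]_(k < N - 1) G k.+1.
Proof. by rewrite big_add1 subn1 big_mkord. Qed.

Lemma sum_nat_le (G1 G2 : nat -> nat) m1 m2 :
  (forall i, (m1 <= i < m2)%N -> G1 i <= G2 i)%N ->
  (\sum_(m1 <= i < m2) G1 i <= \sum_(m1 <= i < m2) G2 i)%N.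
Proof.
move=> h; rewrite big_nat_cond [X in (_ <= X)%N]big_nat_cond.
by apply: leq_sum => i /andP[hi _]; apply: h.
Qed.

Lemma sum_nat_sub (G1 G2 : nat -> nat) m1 m2 :
  (forall i, (m1 <= i < m2)%N -> G1 i <= G2 i)%N ->
  (\sum_(m1 <= i < m2) (G2 i - G1 i) =
   \sum_(m1 <= i < m2) G2 i - \sum_(m1 <= i < m2) G1 i)%N.
Proof.
move=> h; rewrite big_nat_cond [X in (_ = X - _)%N]big_nat_cond.
rewrite [X in (_ = _ - X)%N]big_nat_cond -sumnB //= => i /andP[hi _].
exact: h.
Qed.

(* A product of binomial coefficients C(e_i, b_i) is 0 unless every b_i <= e_i;
   this disposes of the exponent vectors outside the binomial ranges. *)
Lemma prod_binomial_in_range m1 m2 (e b : nat -> nat) :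
  (\prod_(m1 <= i < m2) 'C(e i, b i))%N != 0%N ->
  forall i, (m1 <= i < m2)%N -> (b i <= e i)%N.
Proof.
rewrite -lt0n => /gt0_prodn_seq h i hi.
by rewrite -bin_gt0; apply: h; rewrite ?mem_index_iota.
Qed.

Lemma cut_facts {g l : nat} : (1 <= l <= g)%N ->
  (cut g l + 2 * l = nn g /\ 1 <= cut g l /\ cut g l < nn g /\ 0 < g)%N.
Proof. rewrite /cut /nn; lia. Qed.

Section Expansion.
Context {F : fieldType} {g l M : nat} {z : nat -> F}.
Hypothesis hl : (1 <= l <= g)%N.
Hypothesis hM : (1 <= M)%N.
Local Notation n := (nn g).
Local Notation c := (cut g l).
Local Notation expvec := {ffun 'I_(n - 1) -> 'I_M.+1}.

Lemma sum_split_cut (G : nat -> nat) :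
  (\sum_(1 <= i < n) G i = \sum_(1 <= i < c.+1) G i + \sum_(c.+1 <= i < n) G i)%N.
Proof. by have [_ [_ [? _]]] := cut_facts hl; rewrite (big_cat_nat _ (n := c.+1)). Qed.

Lemma prod_split_cut (G : nat -> F) :
  \prod_(1 <= i < n) G i = \prod_(1 <= i < c.+1) G i * \prod_(c.+1 <= i < n) G i.
Proof. by have [_ [_ [? _]]] := cut_facts hl; rewrite (big_cat_nat _ (n := c.+1)). Qed.

Definition lin (i : nat) : {poly F} := 'X + (z n - z i)%:P.

(* Multiplicity e_j i of the factor v + w_i in the j-th component Phi/(v + w_j). *)
Definition mult (j i : nat) : nat := if i == j then (M - 1)%N else M.

Lemma mult_le j i : (mult j i <= M)%N.
Proof. by rewrite /mult; case: eqP => _ //; exact: leq_subr. Qed.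

Lemma PhiV_factor j : (1 <= j <= n)%N ->
  PhiV g M z = lin j * ('X^(M - (j == n)) * \prod_(1 <= i < n) lin i ^+ mult j i).
Proof.
move=> hj; have [c_n [c_pos [c_lt g_pos]]] := cut_facts hl.
have lin_n : lin n = 'X by rewrite /lin subrr addr0.
rewrite /PhiV big_nat_recr /= -/(lin n) ?lin_n; last by rewrite /nn.
have [-> | jn] := eqVneq j n.
  rewrite lin_n subn1 (eq_big_nat _ _ (F2 := fun i => lin i ^+ mult n i)).
    by rewrite [RHS]mulrA -exprS prednK // mulrC.
  by move=> i /andP[_ hi]; rewrite /mult ifN // neq_ltn hi.
rewrite subn0 mulrCA [LHS]mulrC; congr (_ * _).
have -> : \prod_(1 <= i < n) ('X + (z n - z i)%:P) ^+ M =
   \prod_(1 <= i < n) (lin i ^+ mult j i * (if i == j then lin i else 1)).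
  apply: eq_big_nat => i _; rewrite /mult /lin; case: eqP => _; last by rewrite mulr1.
  by rewrite -exprSr subn1 prednK.
rewrite big_split /= -big_mkcond big_nat1_eq.
have -> : (1 <= j < n)%N by move: hj jn; rewrite /nn; lia.
by rewrite mulrC.
Qed.

Lemma Itilde_coef (p s j : nat) : (1 <= j <= n)%N -> MM p s = M ->
  (M <= l * p ^ s - 1)%N ->
  Itilde p s g l z j =
  (\prod_(1 <= i < n) lin i ^+ mult j i)`_(l * p ^ s - 1 - (M - (j == n)))%N.
Proof.
move=> hj hMM hK; rewrite /Itilde /PhiComp hMM (PhiV_factor _ hj) mulKp; last first.
  exact: monic_neq0 (monicXaddC _).
by rewrite coefXnM ifN // -leqNgt (leq_trans (leq_subr _ _) hK).
Qed.

(* In the binomial expansion of (v + w_i)^(e_j i) the index b counts powers of v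
   for i <= c and powers of w_i for i > c: [vexp] and [wexp] are the resulting
   exponents of v and of w_i, and [bterm] the b-th term. *)
Definition wexp (j i b : nat) : nat := if (i <= c)%N then (mult j i - b)%N else b.
Definition vexp (j i b : nat) : nat := if (i <= c)%N then b else (mult j i - b)%N.
Definition bterm (j i b : nat) : {poly F} :=
  'X^(vexp j i b) * ((z n - z i) ^+ wexp j i b)%:P *+ 'C(mult j i, b).

Lemma lin_pow_expand j i : lin i ^+ mult j i = \sum_(b < M.+1) bterm j i b.
Proof.
rewrite /bterm /wexp /vexp /lin; case: (i <= c)%N.
  rewrite addrC exprDn (sum_binomial_widen _ _ _
    (fun b => (z n - z i)%:P ^+ (mult j i - b) * 'X ^+ b) (mult_le j i)).
  by apply: eq_bigr => b _; rewrite polyC_exp mulrC.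
rewrite exprDn (sum_binomial_widen _ _ _
  (fun b => 'X ^+ (mult j i - b) * (z n - z i)%:P ^+ b) (mult_le j i)).
by apply: eq_bigr => b _; rewrite polyC_exp.
Qed.

Lemma aa_succ (f : expvec) (k : 'I_(n - 1)) :
  aa g M f k.+1 = f k.
Proof. by rewrite /aa subSS subn0 valK. Qed.

Lemma prod_lin_expand j : \prod_(1 <= i < n) lin i ^+ mult j i =
  \sum_(f : expvec) \prod_(1 <= i < n) bterm j i (aa g M f i).
Proof.
rewrite big_nat1_ord (eq_bigr (fun k : 'I_(n - 1) => \sum_(b < M.+1) bterm j k.+1 b)).
  rewrite bigA_distr_bigA /=; apply: eq_bigr => f _.
  by rewrite big_nat1_ord; apply: eq_bigr => k _; rewrite aa_succ.
by move=> k _; rewrite lin_pow_expand.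
Qed.

Lemma prod_bterm j (b : nat -> nat) : \prod_(1 <= i < n) bterm j i (b i) =
  'X^(\sum_(1 <= i < n) vexp j i (b i)) *
  (\prod_(1 <= i < n) (z n - z i) ^+ wexp j i (b i))%:P *+
  \prod_(1 <= i < n) 'C(mult j i, b i).
Proof.
rewrite /bterm -mulr_natr natr_prod -prodrXr rmorph_prod -!big_split /=.
by apply: eq_bigr => i _; rewrite mulr_natr.
Qed.

Lemma coef_monomial D (A : F) m d :
  ('X^D * A%:P *+ m : {poly F})`_d = (A *+ m) * (d == D)%:R.
Proof. by rewrite coefMn mulrC coefCM coefXn mulrnAl. Qed.

Lemma sum_mult j m1 m2 : (m1 <= m2)%N ->
  (\sum_(m1 <= i < m2) mult j i + (m1 <= j < m2) = (m2 - m1) * M)%N.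
Proof.
elim: m2 => [|m2 IH] h.
  have -> : m1 = 0%N by lia.
  by rewrite big_geq // andbF.
case: (leqP m1 m2) => h2; last first.
  have -> : m1 = m2.+1 by lia.
  by rewrite big_geq // subnn mul0n; case: leqP => //= ?; lia.
rewrite big_nat_recr //= [mult j m2]/mult subSn // mulSn; move: (IH h2).
case: eqP => [<-|hne].
  by rewrite ltnn andbF h2 ltnSn /=; lia.
have -> : (m1 <= j < m2.+1)%N = (m1 <= j < m2)%N.
  by apply/idP/idP => /andP[? ?]; apply/andP; split => //; lia.
lia.
Qed.

Lemma vexp_sum j (b : nat -> nat) :
  (forall i, (1 <= i < n)%N -> (b i <= mult j i)%N) ->
  (\sum_(1 <= i < n) vexp j i (b i) = \sum_(1 <= i < c.+1) b i +
     (\sum_(c.+1 <= i < n) mult j i - \sum_(c.+1 <= i < n) b i))%N.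
Proof.
move=> hb; have [c_n [c_pos [c_lt g_pos]]] := cut_facts hl.
rewrite sum_split_cut -sum_nat_sub; last by move=> i hi; apply: hb; lia.
congr (_ + _); apply: eq_big_nat => i hi; rewrite /vexp; [rewrite ifT | rewrite ifF] => //; lia.
Qed.

Lemma wexp_sum j (b : nat -> nat) :
  (forall i, (1 <= i < n)%N -> (b i <= mult j i)%N) ->
  (\sum_(1 <= i < n) wexp j i (b i) = (\sum_(1 <= i < c.+1) mult j i -
     \sum_(1 <= i < c.+1) b i) + \sum_(c.+1 <= i < n) b i)%N.
Proof.
move=> hb; have [c_n [c_pos [c_lt g_pos]]] := cut_facts hl.
rewrite sum_split_cut -sum_nat_sub; last by move=> i hi; apply: hb; lia.
congr (_ + _); apply: eq_big_nat => i hi; rewrite /wexp; [rewrite ifT | rewrite ifF] => //; lia.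
Qed.

Lemma sum_mult_low j :
  (\sum_(1 <= i < c.+1) mult j i + (0 < j < c.+1) = c * M)%N.
Proof. by rewrite sum_mult // subn1. Qed.

Lemma sum_mult_high j :
  (\sum_(c.+1 <= i < n) mult j i + (c < j < n) = 2 * (l * M) - M)%N.
Proof.
have [c_n [c_pos [c_lt g_pos]]] := cut_facts hl.
by rewrite sum_mult // (_ : n - c.+1 = 2 * l - 1)%N ?mulnBl ?mul1n ?mulnA //; lia.
Qed.

Lemma degree_matches j ps (b : nat -> nat) : (1 <= j <= n)%N -> ps = (2 * M).+1 ->
  (forall i, (1 <= i < n)%N -> (b i <= mult j i)%N) ->
  ((l * ps - 1 - (M - (j == n)))%N == \sum_(1 <= i < n) vexp j i (b i)) =
  (\sum_(1 <= i < c.+1) b i ==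
   \sum_(c.+1 <= i < n) b i + (if (j <= c)%N then l - 1 else l))%N.
Proof.
move=> hj hps hb; have [c_n [c_pos [c_lt g_pos]]] := cut_facts hl.
have hlM : (M <= l * M)%N by rewrite leq_pmull //; lia.
have hlps : (l * ps = 2 * (l * M) + l)%N by rewrite hps; ring.
have hB : (\sum_(c.+1 <= i < n) b i <= \sum_(c.+1 <= i < n) mult j i)%N.
  by apply: sum_nat_le => i hi; apply: hb; lia.
by rewrite vexp_sum // (degree_condition hlps (sum_mult_high j) hlM hB) //; lia.
Qed.

Lemma sign_matches j ps (b : nat -> nat) : (1 <= j <= n)%N -> ps = (2 * M).+1 ->
  (forall i, (1 <= i < n)%N -> (b i <= mult j i)%N) ->
  (\sum_(1 <= i < c.+1) b i =
   \sum_(c.+1 <= i < n) b i + (if (j <= c)%N then l - 1 else l))%N ->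
  \prod_(1 <= i < n) (z n - z i) ^+ wexp j i (b i) =
  (-1) ^+ (n * M - l * ps) * \prod_(1 <= i < n) (z i - z n) ^+ wexp j i (b i).
Proof.
move=> hj hps hb hAB; have [c_n [c_pos [c_lt g_pos]]] := cut_facts hl.
have hnM : (n * M = c * M + 2 * (l * M))%N by rewrite -c_n; ring.
have hlps : (l * ps = 2 * (l * M) + l)%N by rewrite hps; ring.
have hA : (\sum_(1 <= i < c.+1) b i <= \sum_(1 <= i < c.+1) mult j i)%N.
  by apply: sum_nat_le => i hi; apply: hb; lia.
under eq_bigr => i _ do rewrite -opprB -mulN1r exprMn.
rewrite big_split /= prodrXr wexp_sum //.
by rewrite (sign_exponent hnM hlps (sum_mult_low j) hAB) //; lia.
Qed.

Local Notation xv := (xpt g l z).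

Lemma meval_xvar i : (2 <= i < n)%N -> (xvar F g i).@[xv] = xval g l z i.
Proof.
move=> hi; rewrite /xvar; case: insubP => [m _ em|].
  by rewrite mevalXU /xpt em; congr xval; lia.
by move/negP; case; rewrite /nn in hi *; lia.
Qed.

Lemma meval_Xmon (a : expvec) :
  (Xmon F g l M a).@[xv] =
  (\prod_(1 <= i < c) xval g l z i.+1 ^+ aa g M a i) *
  \prod_(c.+1 <= i < n) xval g l z i ^+ aa g M a i.
Proof.
have [c_n [c_pos [c_lt g_pos]]] := cut_facts hl.
rewrite /Xmon rmorphM !rmorph_prod big_add1 /=; congr (_ * _).
  by apply: eq_big_nat => i hi; rewrite rmorphXn /= meval_xvar ?subn1 //; lia.
by apply: eq_big_nat => i hi; rewrite rmorphXn /= meval_xvar //; lia.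
Qed.

Lemma meval_Qsum d j :
  (Qsum F g l M d j).@[xv] =
  \sum_(a : expvec | acond g l M d a)
     (acoef g M j a)%:R * (Xmon F g l M a).@[xv].
Proof. by rewrite /Qsum rmorph_sum; apply: eq_bigr => a _; rewrite /= mevalZ. Qed.

Lemma meval_Qls p s j : MM p s = M -> (1 <= j)%N ->
  (Qls F p s g l j).@[xv] = (if (j < c)%N then xval g l z j.+1 else 1) *
    (Qsum F g l M (if (j <= c)%N then (l - 1)%N else l) j).@[xv].
Proof.
move=> hMM hj; have [c_n [c_pos [c_lt g_pos]]] := cut_facts hl.
rewrite /Qls /= hMM; case: ltngtP => h /=; rewrite ?mul1r //.
by rewrite rmorphM /= meval_xvar //; lia.
Qed.

Hypothesis z_inj : forall i j : nat, (1 <= i)%N -> (i < j)%N -> (j <= n)%N -> z i != z j.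

Lemma diff_neq0 i : (1 <= i < n)%N -> z i - z n != 0.
Proof. by move=> /andP[h1 h2]; rewrite subr_eq0 z_inj // ltnW. Qed.

Lemma prod_diff_neq0 m1 m2 (e : nat -> nat) : (1 <= m1)%N -> (m2 <= n)%N ->
  \prod_(m1 <= i < m2) (z i - z n) ^+ e i != 0.
Proof.
move=> h1 h2; rewrite prodf_seq_neq0; apply/allP => i; rewrite mem_index_iota => hi /=.
by rewrite expf_neq0 // diff_neq0 //; lia.
Qed.

Local Notation wc := (z c - z n).

Lemma prod_xval_low (b : nat -> nat) :
  \prod_(1 <= i < c) xval g l z i.+1 ^+ b i =
  wc ^+ (\sum_(1 <= i < c) b i) / \prod_(1 <= i < c) (z i - z n) ^+ b i.
Proof.
rewrite -prodrXr -prodfV -big_split /=; apply: eq_big_nat => i hi.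
by rewrite /xval ifT ?expr_div_n //; lia.
Qed.

Lemma prod_xval_high (b : nat -> nat) :
  \prod_(c.+1 <= i < n) xval g l z i ^+ b i =
  \prod_(c.+1 <= i < n) (z i - z n) ^+ b i / wc ^+ (\sum_(c.+1 <= i < n) b i).
Proof.
rewrite -prodrXr -prodfV -big_split /=; apply: eq_big_nat => i hi.
by rewrite /xval ifF ?expr_div_n //; lia.
Qed.

(* x_1^M = prod_{i<=c} (z_i - z_n)^M: each factor splits into the powers
   e_j i - b_i and b_i, plus the power of z_j - z_n missing from e_j j. *)
Lemma x1_pow_split j (b : nat -> nat) : (1 <= j <= n)%N ->
  (forall i, (1 <= i < n)%N -> (b i <= mult j i)%N) ->
  \prod_(1 <= i < c.+1) (z i - z n) ^+ (mult j i - b i) *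
  \prod_(1 <= i < c) (z i - z n) ^+ b i * wc ^+ b c *
  (if (j <= c)%N then z j - z n else 1) = x1 g l z ^+ M.
Proof.
move=> hj hb; have [c_n [c_pos [c_lt g_pos]]] := cut_facts hl.
rewrite /x1 -prodrXl.
have -> : \prod_(1 <= i < c.+1) (z i - z n) ^+ M =
    \prod_(1 <= i < c.+1) ((z i - z n) ^+ (mult j i - b i) * (z i - z n) ^+ b i *
                           (if i == j then z i - z n else 1)).
  apply: eq_big_nat => i hi; move: (hb i ltac:(lia)); rewrite /mult.
  case: eqP => _ hbi; last by rewrite mulr1 -exprD subnK.
  by rewrite -exprD -exprSr subnK // subn1 prednK.
rewrite !big_split /= -big_mkcond big_nat1_eq.
rewrite [\prod_(1 <= i < c.+1) (z i - z n) ^+ b i]big_nat_recr //= !mulrA.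
by have -> : (0 < j < c.+1)%N = (j <= c)%N by move/andP: hj => [? ?]; apply/idP/idP; lia.
Qed.

(* The factor x_{j+1} of Q_j (j < c) accounts for the difference between
   the shifts l - 1 and l. *)
Lemma extra_factor j : (1 <= j)%N ->
  (if (j < c)%N then xval g l z j.+1 else 1) * (if (j <= c)%N then z j - z n else 1) *
  wc ^+ (if (j <= c)%N then (l - 1)%N else l) = wc ^+ l.
Proof.
move=> hj; have [c_n [c_pos [c_lt g_pos]]] := cut_facts hl.
have hl1 : (l - 1).+1 = l by lia.
case: (ltngtP j c) => hjc /=.
- rewrite /xval ifT; last by lia.
  by rewrite /= divfK ?diff_neq0 -?exprS ?hl1 //; lia.
- by rewrite !mul1r.
- by rewrite hjc mul1r -exprS hl1.
Qed.

Lemma magnitude j (b : nat -> nat) : (1 <= j <= n)%N ->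
  (forall i, (1 <= i < n)%N -> (b i <= mult j i)%N) ->
  (\sum_(1 <= i < c.+1) b i =
   \sum_(c.+1 <= i < n) b i + (if (j <= c)%N then l - 1 else l))%N ->
  wc ^+ l * \prod_(1 <= i < n) (z i - z n) ^+ wexp j i (b i)
  = x1 g l z ^+ M * (if (j < c)%N then xval g l z j.+1 else 1) *
    ((\prod_(1 <= i < c) xval g l z i.+1 ^+ b i) *
     \prod_(c.+1 <= i < n) xval g l z i ^+ b i).
Proof.
move=> hj hb hA; have [c_n [c_pos [c_lt g_pos]]] := cut_facts hl.
have wc_neq0 : wc != 0 by apply: diff_neq0; lia.
set d := if (j <= c)%N then (l - 1)%N else l.
set B := (\sum_(c.+1 <= i < n) b i)%N.
have split_w : \prod_(1 <= i < n) (z i - z n) ^+ wexp j i (b i) =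
    \prod_(1 <= i < c.+1) (z i - z n) ^+ (mult j i - b i) *
    \prod_(c.+1 <= i < n) (z i - z n) ^+ b i.
  rewrite prod_split_cut; congr (_ * _); apply: eq_big_nat => i hi; rewrite /wexp.
    by rewrite ifT //; lia.
  by rewrite ifF //; lia.
have hA0 : wc ^+ (\sum_(1 <= i < c) b i) = wc ^+ B * wc ^+ d / wc ^+ b c.
  by rewrite -exprD -hA big_nat_recr //= exprD mulfK // expf_neq0.
rewrite split_w prod_xval_low prod_xval_high hA0.
rewrite -(@x1_pow_split j b hj hb) -(@extra_factor j (proj1 (andP hj))) -/d.
have P1_neq0 := @prod_diff_neq0 1 c b (leqnn _) (ltnW c_lt).
have wB_neq0 : wc ^+ B != 0 by rewrite expf_neq0.
have wbc_neq0 : wc ^+ b c != 0 by rewrite expf_neq0.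
by field; rewrite P1_neq0 wbc_neq0 wB_neq0.
Qed.

Lemma term_identity j ps (f : expvec) :
  (1 <= j <= n)%N -> ps = (2 * M).+1 ->
  (-1) ^+ (n * M - l * ps) * wc ^+ l *
   ((\prod_(1 <= i < n) (z n - z i) ^+ wexp j i (aa g M f i)) *+
      \prod_(1 <= i < n) 'C(mult j i, aa g M f i) *
    ((l * ps - 1 - (M - (j == n)))%N == \sum_(1 <= i < n) vexp j i (aa g M f i))%:R)
  = x1 g l z ^+ M * (if (j < c)%N then xval g l z j.+1 else 1) *
    (if acond g l M (if (j <= c)%N then (l - 1)%N else l) f
     then (acoef g M j f)%:R * (Xmon F g l M f).@[xv] else 0).
Proof.
move=> hj hps; set b := aa g M f; set d := if (j <= c)%N then (l - 1)%N else l.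
have acoefE : acoef g M j f = (\prod_(1 <= i < n) 'C(mult j i, b i))%N by [].
have [C0 | /prod_binomial_in_range hb] :=
    eqVneq (\prod_(1 <= i < n) 'C(mult j i, b i))%N 0%N.
  by rewrite acoefE C0 mulr0n mul0r mulr0; case: acond; rewrite ?mul0r mulr0.
rewrite degree_matches // /acond -/b -/d; case: eqP => hAB; last by rewrite !mulr0.
have sq : (-1) ^+ (n * M - l * ps) * (-1) ^+ (n * M - l * ps) = 1 :> F.
  by rewrite -exprMn mulrNN mulr1 expr1n.
rewrite (@sign_matches j ps b hj hps hb hAB) meval_Xmon mulr1 -mulr_natr acoefE.
transitivity ((-1) ^+ (n * M - l * ps) * (-1) ^+ (n * M - l * ps) *
  (wc ^+ l * \prod_(1 <= i < n) (z i - z n) ^+ wexp j i (b i)) *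
  (\prod_(1 <= i < n) 'C(mult j i, b i))%:R); first by ring.
by rewrite sq mul1r (@magnitude j b hj hb hAB); ring.
Qed.

Lemma Itilde_identity p s j : MM p s = M -> (p ^ s = (2 * M).+1)%N -> (1 <= j <= n)%N ->
  (-1) ^+ (n * MM p s - l * p ^ s)%N * (z (n - 2 * l)%N - z n) ^+ l * Itilde p s g l z j
  = x1 g l z ^+ MM p s * (Qls F p s g l j).@[xv].
Proof.
move=> hMM hps hj.
have hK : (M <= l * p ^ s - 1)%N by rewrite hps; case/andP: hl => hl1 _; nia.
rewrite (@Itilde_coef p s j hj hMM hK) prod_lin_expand coef_sum hMM.
rewrite meval_Qls //; last by case/andP: hj.
rewrite meval_Qsum mulrA mulr_sumr mulr_sumr [RHS]big_mkcond /=.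
apply: eq_bigr => f _.
by rewrite prod_bterm coef_monomial term_identity //; case: acond; rewrite ?mulr0.
Qed.

End Expansion.

Section ConstantTerm.
Context {F : fieldType} {g l M : nat}.
Hypothesis hl : (1 <= l <= g)%N.
Hypothesis hlM : (l <= M)%N.
Local Notation n := (nn g).
Local Notation c := (cut g l).
Local Notation expvec := {ffun 'I_(n - 1) -> 'I_M.+1}.

Lemma xvar_const i : (xvar F g i)@_0 = 0.
Proof.
rewrite /xvar; case: insubP => [m _ _|_]; last by rewrite mcoeff0.
by rewrite mcoeffX mnm1_eq0.
Qed.

(* The monomial X(a) is constant iff every exponent other than a_c vanishes
   (a_c is the one exponent not attached to a variable). *)
Lemma Xmon_const (a : expvec) :
  (Xmon F g l M a)@_0 =
  ((\sum_(1 <= i < c) aa g M a i + \sum_(c.+1 <= i < n) aa g M a i)%N == 0%N)%:R.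
Proof.
rewrite /Xmon rmorphM !rmorph_prod /=.
under eq_bigr => i _ do rewrite rmorphXn /= xvar_const.
under [X in _ * X]eq_bigr => i _ do rewrite rmorphXn /= xvar_const.
rewrite !prodrXr -exprD expr0n big_add1 /=.
by congr ((_ + _ == _)%N)%:R; apply: eq_bigr => i _; rewrite subn1.
Qed.

Definition apeak (d : nat) : expvec :=
  [ffun k : 'I_(n - 1) => if (k.+1 == c)%N then (inord d : 'I_M.+1) else ord0].

Lemma aa_apeak d i : (d <= M)%N -> (1 <= i < n)%N ->
  aa g M (apeak d) i = if i == c then d else 0%N.
Proof.
move=> hd hi; rewrite /aa; case: insubP => [k _ ek|]; last first.
  by move/negP; case; rewrite /nn in hi *; lia.
rewrite ffunE; have -> : k.+1 = i by rewrite /= in ek; lia.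
by case: eqP => // _; rewrite inordK.
Qed.

Lemma sum_apeak_off d m1 m2 : (d <= M)%N -> (1 <= m1)%N -> (m2 <= n)%N ->
  (forall i, (m1 <= i < m2)%N -> i != c) ->
  (\sum_(m1 <= i < m2) aa g M (apeak d) i = 0)%N.
Proof.
move=> hd h1 h2 h; rewrite big_nat_cond big1 // => i /andP[hi _].
by rewrite aa_apeak ?ifN ?h //; lia.
Qed.

Lemma acond_apeak d : (d <= M)%N -> acond g l M d (apeak d).
Proof.
move=> hd; have [c_n [c_pos [c_lt g_pos]]] := cut_facts hl.
rewrite /acond big_nat_recr //= aa_apeak //; last by lia.
by rewrite eqxx !sum_apeak_off //; try lia; move=> i hi; apply/eqP; lia.
Qed.

Lemma apeak_unique d (a : expvec) : (d <= M)%N ->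
  acond g l M d a ->
  ((\sum_(1 <= i < c) aa g M a i + \sum_(c.+1 <= i < n) aa g M a i)%N == 0%N) =
  (a == apeak d).
Proof.
move=> hd; have [c_n [c_pos [c_lt g_pos]]] := cut_facts hl.
rewrite /acond big_nat_recr //= => /eqP hA.
apply/idP/eqP => [|->]; last first.
  by rewrite !sum_apeak_off //; try lia; move=> i hi; apply/eqP; lia.
rewrite addn_eq0 => /andP[/eqP hS1 /eqP hS2].
move: hA; rewrite hS1 hS2 !add0n => hac.
apply/ffunP => k; apply: val_inj; rewrite /= ffunE -(aa_succ a k).
case: eqP => [->|hk]; first by rewrite hac inordK.
have hkn : (k.+1 < n)%N by have := ltn_ord k; rewrite /nn; lia.
case: (ltnP k.+1 c) => hkc.
  move/eqP: hS1; rewrite sum_nat_seq_eq0 => /allP /(_ k.+1).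
  by rewrite mem_index_iota hkc /= => /(_ isT) /eqP.
move/eqP: hS2; rewrite sum_nat_seq_eq0 => /allP /(_ k.+1).
rewrite mem_index_iota hkn andbT (_ : (c < k.+1)%N) //; last by move/eqP: hk; lia.
by move=> /(_ isT) /eqP.
Qed.

Lemma acoef_apeak d j : (d <= M)%N ->
  acoef g M j (apeak d) = 'C(if c == j then (M - 1)%N else M, d).
Proof.
move=> hd; have [c_n [c_pos [c_lt g_pos]]] := cut_facts hl.
rewrite /acoef (eq_big_nat _ _ (F2 := fun i =>
    if i == c then 'C(if c == j then (M - 1)%N else M, d) else 1%N)).
  by rewrite -big_mkcond big_nat1_eq ifT //; lia.
by move=> i hi; rewrite aa_apeak //; case: (eqVneq i c) => [->|_]; rewrite ?bin0.
Qed.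

Lemma Qsum_const d j : (d <= M)%N ->
  (Qsum F g l M d j)@_0 = ('C(if c == j then (M - 1)%N else M, d))%:R.
Proof.
move=> hd; rewrite /Qsum raddf_sum /=.
under eq_bigr => a ha do rewrite mcoeffZ Xmon_const (@apeak_unique d a hd ha) mulr_natr mulrb.
rewrite -big_mkcondr (big_pred1 (apeak d)) ?acoef_apeak // => a /=.
by case: eqVneq => [->|_]; rewrite ?acond_apeak ?andbF.
Qed.

Lemma Qls_const p s j : MM p s = M ->
  (Qls F p s g l j)@_0 = if (j < c)%N then 0 else if j == c then ('C(M - 1, l - 1))%:R
                          else ('C(M, l))%:R.
Proof.
move=> hMM; rewrite /Qls /= hMM; case: ltngtP => h.
- by rewrite rmorphM /= xvar_const mul0r.
- by rewrite Qsum_const // ifN //; apply/eqP; lia.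
- by rewrite Qsum_const ?h ?eqxx //; lia.
Qed.

End ConstantTerm.

Lemma odd_half (m : nat) : odd m -> m = (2 * (m.-1)./2).+1.
Proof.
move=> hm; have e := odd_double_half m; rewrite hm /= in e.
by rewrite -{2}e add1n succnK doubleK -e -mul2n; lia.
Qed.

Lemma bin_ratio (m k : nat) : (1 <= k)%N -> (m * 'C(m - 1, k - 1) = k * 'C(m, k))%N.
Proof. by move=> hk; rewrite subn1 mul_bin_diag subn1 prednK. Qed.

Theorem theorem9p3 (F : numFieldType) (p s g l : nat) :
  prime p -> odd p -> (0 < g)%N -> (nn g < p)%N -> (1 <= s)%N ->
  (1 <= l <= g)%N ->
  (forall z : nat -> F,
     (forall i j : nat, (1 <= i)%N -> (i < j)%N -> (j <= nn g)%N -> z i != z j) ->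
     forall j : nat, (1 <= j <= nn g)%N ->
       (-1) ^+ (nn g * MM p s - l * p ^ s) * (z (nn g - 2 * l)%N - z (nn g)) ^+ l
         * Itilde p s g l z j
       = x1 g l z ^+ MM p s * (Qls F p s g l j).@[xpt g l z])
  /\
  (forall j : nat, (1 <= j <= nn g)%N ->
     (Qls F p s g l j)@_mnm0
     = ('C(MM p s, l))%:R *
       (if (j < nn g - 2 * l)%N then 0
        else if j == (nn g - 2 * l)%N then l%:R / (MM p s)%:R
        else 1)).
Proof.
move=> hp hodd hg hpn hs hl.
have hps : (p ^ s = (2 * MM p s).+1)%N by apply: odd_half; rewrite oddX hodd orbT.
have hgM : (g < MM p s)%N.
  have : (p <= p ^ s)%N by rewrite -{1}(expn1 p) leq_pexp2l // prime_gt0.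
  by move: hpn; rewrite hps /nn; lia.
have hM : (1 <= MM p s)%N by lia.
split=> [z z_inj j hj | j hj].
  exact: (Itilde_identity hl hM z_inj p s j erefl hps hj).
have hlM : (l <= MM p s)%N by case/andP: hl => _; lia.
rewrite (Qls_const hl hlM p s j erefl) /cut.
case: ltnP => _; first by rewrite mulr0.
case: eqP => _; last by rewrite mulr1.
have M_neq0 : ((MM p s)%:R : F) != 0 by rewrite pnatr_eq0 -lt0n.
apply: (mulfI M_neq0); rewrite -natrM bin_ratio; last by case/andP: hl.
by rewrite natrM; field.
Qed.
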